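(* Consider the Online Submodular Bipartite Matching problem (defined in the context) with integral arrival rates, i.e. $p_v = 1/T$ and $r_v = T p_v = 1$ for every $v \in V$. There exists an online algorithm which achieves a competitive ratio of at least $\frac{1}{2}\left(1-e^{-1/2}\right)\left(1-\frac{1}{e}\right)$ for this problem.
   Context: Online Submodular Bipartite Matching (OSBM): we are given a bipartite graph $G=(U,V,E)$ with $m=|E|$, where $U$ are offline vertices and $V$ are online vertex types, a finite known horizon $T$, and a known probability distribution $\{p_v\}_{v\in V}$ with $\sum_{v} p_v \le 1$. In each round $t\in\{1,\dots,T\}$, independently across rounds, at most one vertex of $V$ arrives: $v$ arrives with probability $p_v$ (and none arrives with probability $1-\sum_v p_v$). Let $r_v = T p_v \in [0,1]$. When $v$ arrives, the algorithm must immediately and irrevocably either reject it or match it to a neighbor $u\in U$ (via an edge $(u,v)\in E$) that is still available; each $u\in U$ has unit capacity and becomes unavailable once matched (a vertex of $V$ may be matched several times if it arrives several times). We are given value-oracle access to a non-negative monotone submodular set function $f:2^E\to\mathbb{R}_{\ge 0}$ with $f(\emptyset)=0$; the goal is to maximize $\mathbb{E}[f(\mathcal{M})]$ where $\mathcal{M}$ is the final set of matched edges (randomness over arrivals and the algorithm). For an arrival sequence $S$, $\mathrm{OPT}(S)$ is the maximum of $f$ over all feasible (hindsight) matchings for the arrivals in $S$, and $\mathbb{E}[\mathrm{OPT}]$ is its expectation over $S$. The competitive ratio of an algorithm ALG is $\min$ over instances (graph, function, distribution) of $\mathbb{E}[\mathrm{ALG}]/\mathbb{E}[\mathrm{OPT}]$.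 *)

From HB Require Import structures.
From mathcomp Require Import all_boot all_order all_algebra.
From mathcomp Require Import reals sequences exp.

Set Implicit Arguments.
Unset Strict Implicit.
Unset Printing Implicit Defensive.

Import Order.TTheory GRing.Theory Num.Theory.
Local Open Scope ring_scope.

Section OSBM.
Variables (R : realType) (U V : finType).

(* An arrival sequence over horizon T: round t sees [Some v] (v arrives) or
   [None] (no arrival). *)
Definition arrivals (T : nat) := {ffun 'I_T -> option V}.

Definition arr_prob (T : nat) (a : option V) : R :=
  match a with
  | None => 1 - #|V|%:R / T%:R
  | Some _ => 1 / T%:R
  end.

Definition seq_prob (T : nat) (S : arrivals T) : R :=
  \prod_(t < T) arr_prob T (S t).

Definition feasible_matching (E : {set U * V}) (T : nat) (S : arrivals T)
    (M : {set U * V}) : bool :=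
  [&& M \subset E,
      [forall u : U, #|[set e in M | e.1 == u]| <= 1]%N &
      [forall v : V, #|[set e in M | e.2 == v]| <= #|[set t | S t == Some v]|]%N].

Definition OPT (E : {set U * V}) (f : {set U * V} -> R) (T : nat)
    (S : arrivals T) : R :=
  \big[Num.max/0]_(M : {set U * V} | feasible_matching E S M) f M.

Definition expected_OPT (E : {set U * V}) (f : {set U * V} -> R) (T : nat) : R :=
  \sum_(S : arrivals T) seq_prob S * OPT E f S.

(* A (randomized, behavioral) online algorithm: given the history of past
   rounds (arrival, decision) and the currently arriving v, a probability
   distribution over decisions: [None] = reject, [Some u] = match to u. *)
Definition history := seq (option V * option U).
Definition online_policy := history -> V -> {ffun option U -> R}.

Definition valid_policy (pol : online_policy) : Prop :=
  forall (h : history) (v : V),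
    (forall o, 0 <= pol h v o) /\ \sum_(o : option U) pol h v o = 1.

Definition matched (M : {set U * V}) (u : U) : bool := [exists v : V, (u, v) \in M].

(* Effect of a decision: the edge (u,v) is added iff it is an edge of G and u
   is still available; an infeasible choice amounts to a rejection. *)
Definition apply_decision (E : {set U * V}) (M : {set U * V}) (v : V)
    (o : option U) : {set U * V} :=
  match o with
  | Some u => if ((u, v) \in E) && ~~ matched M u then (u, v) |: M else M
  | None => M
  end.

Fixpoint alg_value (E : {set U * V}) (f : {set U * V} -> R) (T : nat)
    (pol : online_policy) (k : nat) (h : history) (M : {set U * V}) : R :=
  match k with
  | 0 => f M
  | k'.+1 =>
      \sum_(a : option V) arr_prob T a *
        match a with
        | None => alg_value E f T pol k' (rcons h (None, None)) M
        | Some v => \sum_(o : option U)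
                      pol h v o * alg_value E f T pol k' (rcons h (Some v, o))
                                            (apply_decision E M v o)
        end
  end.

Definition expected_ALG (E : {set U * V}) (f : {set U * V} -> R) (T : nat)
    (pol : online_policy) : R :=
  alg_value E f T pol T [::] set0.

Definition monotone_submodular_on (E : {set U * V}) (f : {set U * V} -> R) : Prop :=
  [/\ f set0 = 0,
      (forall A : {set U * V}, A \subset E -> 0 <= f A),
      (forall A B : {set U * V}, A \subset B -> B \subset E -> f A <= f B) &
      (forall A B : {set U * V}, A \subset E -> B \subset E -> f (A :|: B) + f (A :&: B) <= f A + f B)].

End OSBM.

Definition osbm_ratio (R : realType) : R :=
  (1 / 2) * (1 - expR (- (1 / 2))) * (1 - expR (-1)).

From HB Require Import structures.
From mathcomp Require Import all_boot all_order all_algebra.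
From mathcomp Require Import reals sequences exp.
From mathcomp Require Import ring lra.
Import Order.TTheory GRing.Theory Num.Theory.
Local Open Scope ring_scope.
Set Implicit Arguments.
Unset Strict Implicit.
Unset Printing Implicit Defensive.

(* Let x be the edge marginals of an offline optimum: x has degree at most 1
   on both sides, and by submodularity E[OPT] - f(A) <= sum_e x_e (f(A + e) - f(A)).
   The algorithm matches an arriving v to u with probability x(u, v) / 2, so in
   every round each edge e is proposed with probability pi_e = x_e / (2T), and a
   proposal is accepted whenever its offline endpoint has not been proposed
   before.  Follow the set P of all proposed edges: a proposal of e at an
   untouched offline vertex gains at least f(P + e) - f(P).  An offline vertex
   is proposed with probability at most beta = 1/(2T) per round, so the runs on
   which it stays untouched for j rounds carry at least (1 - beta)^j times the
   process K adding each e with probability pi_e / (1 - beta).  Hence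
   ALG >= G = sum_j (1 - beta)^j sum_e pi_e K^j(gain_e)(empty).
   With a = (1 - beta)^T and F = K^T(f)(empty), the decay of K^j(gain_e) in j
   gives G >= (1 - a)(E[OPT] - F), and telescoping f along K gives G >= a F.
   So G >= a (1 - a) E[OPT], and a lies in [1/2, e^(-1/2)], where
   a (1 - a) >= (1 - e^(-1/2)) / 2 exceeds the required ratio. *)

Lemma big_option (R : nmodType) (V : finType) (F : option V -> R) :
  \sum_(a : option V) F a = F None + \sum_v F (Some v).
Proof.
rewrite (bigD1 None) //=; congr (_ + _).
rewrite (@reindex_omap _ _ _ _ _ Some id) /=; last by case.
by apply: eq_bigl => v; rewrite eqxx.
Qed.

Lemma natr_card_set (R : pzSemiRingType) (I : finType) (P : pred I) :
  #|[set i | P i]|%:R = \sum_i (P i)%:R :> R.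
Proof.
rewrite -sum1_card natr_sum big_mkcond /=.
by apply: eq_bigr => i _; rewrite inE; case: (P i).
Qed.

Lemma sum_mem_card (R : pzSemiRingType) (I : finType) (A : {set I}) (P : pred I) :
  \sum_(i | P i) (i \in A)%:R = #|[set i in A | P i]|%:R :> R.
Proof.
rewrite natr_card_set big_mkcond /=; apply: eq_bigr => i _.
by case: (P i); rewrite ?andbT ?andbF.
Qed.

Lemma sum_pairs_snd (R : nmodType) (U V : finType) (F : U * V -> R) v :
  \sum_(e | e.2 == v) F e = \sum_u F (u, v).
Proof.
have -> : \sum_(e | e.2 == v) F e = \sum_(e | xpredT e.1 && (e.2 == v)) F (e.1, e.2).
  by apply: eq_big => -[].
rewrite -(pair_big xpredT (pred1 v) (fun u w => F (u, w))) /=.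
by apply: eq_bigr => u _; rewrite big_pred1_eq.
Qed.

Lemma sum_pairs (R : nmodType) (U V : finType) (F : U * V -> R) :
  \sum_e F e = \sum_v \sum_u F (u, v).
Proof.
rewrite (partition_big snd xpredT) //=.
by apply: eq_bigr => v _; exact: sum_pairs_snd.
Qed.

Lemma subU1set (X : finType) (e : X) (A B : {set X}) :
  A \subset B -> e \in B -> e |: A \subset B.
Proof. by move=> AB eB; rewrite subUset sub1set eB. Qed.

Lemma bernoulli_ineq (R : realDomainType) (x : R) n :
  -1 <= x -> 1 + n%:R * x <= (1 + x) ^+ n.
Proof.
move=> x_ge; elim: n => [|n IH]; first by rewrite mul0r addr0 expr0.
have x2_ge0 : 0 <= n%:R * x * x by rewrite -mulrA mulr_ge0 ?ler0n // -expr2 sqr_ge0.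
rewrite exprS -natr1.
have : (1 + x) * (1 + n%:R * x) <= (1 + x) * (1 + x) ^+ n.
  by rewrite ler_wpM2l // -lerBlDl sub0r.
nra.
Qed.

Lemma exprn_le_expR (R : realType) (b : R) n :
  b <= 1 -> (1 - b) ^+ n <= expR (- (n%:R * b)).
Proof.
move=> b_le1; rewrite -mulrN mulrC expRM_natr.
elim: n => [|n IH]; first by rewrite !expr0.
rewrite !exprS; apply: ler_pM => //; first by rewrite subr_ge0.
  by rewrite exprn_ge0 // subr_ge0.
by have := expR_ge1Dx (- b); rewrite addrC.
Qed.

Lemma osbm_ratio_le (R : realType) (a : R) :
  1/2 <= a -> a <= expR (- (1/2)) -> osbm_ratio R <= a * (1 - a).
Proof.
move=> a_lo a_hi; have e1 : expR (- (1/2)) <= 1 :> R by rewrite expR_le1; lra.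
have c1_ge0 : 0 <= 1/2 * (1 - expR (- (1/2))) :> R by lra.
apply: le_trans (_ : _ <= 1/2 * (1 - expR (- (1/2)))) _.
  by rewrite ler_piMr // lerBlDr lerDl expR_ge0.
by apply: ler_pM; lra.
Qed.

Section ProductDistribution.
Variables (R : comPzSemiRingType) (I A : finType) (p : A -> R).
Hypothesis p_sum1 : \sum_a p a = 1.

Lemma prod_ffun_sum1 : \sum_(S : {ffun I -> A}) \prod_i p (S i) = 1.
Proof.
by rewrite -(bigA_distr_bigA (fun _ a => p a)) /= big1 // => i _; rewrite p_sum1.
Qed.

Lemma prod_ffun_marginal i a :
  \sum_(S : {ffun I -> A}) (\prod_j p (S j)) * (S i == a)%:R = p a.
Proof.
pose q j b := if j == i then p b * (b == a)%:R else p b.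
have -> : \sum_(S : {ffun I -> A}) (\prod_j p (S j)) * (S i == a)%:R =
          \sum_(S : {ffun I -> A}) \prod_j q j (S j).
  apply: eq_bigr => S _; rewrite (bigD1 i) //= [in RHS](bigD1 i) //= /q eqxx.
  by rewrite mulrAC; congr (_ * _); apply: eq_bigr => j /negbTE ->.
rewrite -(bigA_distr_bigA q) /= (bigD1 i) //= [X in _ * X]big1 => [|j ji]; last first.
  by rewrite /q (negbTE ji) p_sum1.
rewrite mulr1 /q eqxx (bigD1 a) //= eqxx mulr1 big1 ?addr0 // => b /negbTE ->.
by rewrite mulr0.
Qed.

End ProductDistribution.

Section AddStep.
Variables (R : realDomainType) (X : finType) (E : {set X}).
Implicit Types (h : {set X} -> R) (P Q : {set X}).

Definition antitone_on h := forall P Q, P \subset Q -> Q \subset E -> h Q <= h P.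
Definition nonneg_on h := forall P, P \subset E -> 0 <= h P.

Definition add_step (w0 : R) (w : X -> R) h P : R :=
  w0 * h P + \sum_e w e * h (e |: P).

Lemma iter_add_stepS w0 w j h P :
  iter j.+1 (add_step w0 w) h P =
  w0 * iter j (add_step w0 w) h P + \sum_e w e * iter j (add_step w0 w) h (e |: P).
Proof. by []. Qed.

Lemma add_stepZ w0 w a h P :
  add_step w0 w (fun Q => a * h Q) P = a * add_step w0 w h P.
Proof.
rewrite /add_step mulrDr mulr_sumr mulrCA; congr (_ + _).
by apply: eq_bigr => e _; rewrite mulrCA.
Qed.

Lemma iter_add_stepD w0 w j h1 h2 P :
  iter j (add_step w0 w) (fun Q => h1 Q + h2 Q) P =
  iter j (add_step w0 w) h1 P + iter j (add_step w0 w) h2 P.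
Proof.
elim: j P => [//|j IH] P; rewrite !iter_add_stepS IH.
under eq_bigr => e _ do rewrite IH mulrDr.
by rewrite big_split /=; ring.
Qed.

Lemma iter_add_step_sum w0 w j (I : finType) (a : I -> R) (hs : I -> {set X} -> R) P :
  iter j (add_step w0 w) (fun Q => \sum_i a i * hs i Q) P =
  \sum_i a i * iter j (add_step w0 w) (hs i) P.
Proof.
elim: j P => [//|j IH] P; rewrite iter_add_stepS IH.
under [X in _ + X]eq_bigr => e _ do rewrite IH mulr_sumr.
under [RHS]eq_bigr => i _ do rewrite iter_add_stepS mulrDr mulr_sumr.
rewrite big_split /= [w0 * _]mulr_sumr [X in _ + X = _]exchange_big /=.
congr (_ + _).
  by apply: eq_bigr => i _; ring.
by apply: eq_bigr => i _; apply: eq_bigr => e _; ring.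
Qed.

Lemma iter_add_step_affine w0 w j c a h P : w0 + \sum_e w e = 1 ->
  iter j (add_step w0 w) (fun Q => c + a * h Q) P = c + a * iter j (add_step w0 w) h P.
Proof.
move=> w_sum1; elim: j P => [//|j IH] P; rewrite !iter_add_stepS IH.
under eq_bigr => e _ do rewrite IH mulrDr mulrCA.
rewrite big_split /= -mulr_suml -mulr_sumr.
have -> : w0 = 1 - \sum_e w e by rewrite -w_sum1 addrK.
ring.
Qed.

Section Weights.
Variables (w0 : R) (w : X -> R).
Hypotheses (w0_ge0 : 0 <= w0) (w_ge0 : forall e, 0 <= w e)
  (w_out : forall e, e \notin E -> w e = 0).

Lemma ler_weighted_sum (a b : X -> R) :
  (forall e, e \in E -> a e <= b e) -> \sum_e w e * a e <= \sum_e w e * b e.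
Proof.
move=> ab; apply: ler_sum => e _; case: (boolP (e \in E)) => [eE|/w_out->].
  by rewrite ler_wpM2l ?ab.
by rewrite !mul0r.
Qed.

Lemma add_step_le h1 h2 P :
  (forall Q, Q \subset E -> h1 Q <= h2 Q) -> P \subset E ->
  add_step w0 w h1 P <= add_step w0 w h2 P.
Proof.
move=> h12 PE; rewrite lerD ?ler_wpM2l ?h12 //.
by apply: ler_weighted_sum => e eE; exact/h12/subU1set.
Qed.

Lemma iter_add_step_le j h1 h2 P :
  (forall Q, Q \subset E -> h1 Q <= h2 Q) -> P \subset E ->
  iter j (add_step w0 w) h1 P <= iter j (add_step w0 w) h2 P.
Proof.
by move=> h12; elim: j P => [|j IH] P PE; [exact: h12 | exact: add_step_le].
Qed.

Lemma iter_add_step_antitone j h :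
  antitone_on h -> antitone_on (iter j (add_step w0 w) h).
Proof.
move=> h_anti; elim: j => [//|j IH] P Q PQ QE; rewrite !iter_add_stepS.
rewrite lerD ?ler_wpM2l ?IH //; apply: ler_weighted_sum => e eE.
by apply: IH; [exact: setUS | exact: subU1set].
Qed.

Lemma iter_add_step_nonneg j h :
  nonneg_on h -> nonneg_on (iter j (add_step w0 w) h).
Proof.
move=> h_nn; elim: j => [//|j IH] P PE; rewrite iter_add_stepS.
rewrite addr_ge0 ?mulr_ge0 ?IH // sumr_ge0 // => e _.
by case: (boolP (e \in E)) => [eE|/w_out->]; rewrite ?mul0r // mulr_ge0 ?IH ?subU1set.
Qed.

Lemma iter_add_step_decreasing j n h P : w0 + \sum_e w e = 1 ->
  antitone_on h -> (j <= n)%N -> P \subset E ->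
  iter n (add_step w0 w) h P <= iter j (add_step w0 w) h P.
Proof.
move=> w_sum1 h_anti + PE; elim: n => [|n IH]; first by rewrite leqn0 => /eqP->.
rewrite leq_eqVlt => /orP[/eqP-> //|]; rewrite ltnS => /IH; apply: le_trans.
have g_anti := iter_add_step_antitone n h_anti.
rewrite iter_add_stepS -[X in _ <= X]mul1r -w_sum1 mulrDl lerD2l mulr_suml.
by apply: ler_weighted_sum => e eE; apply: g_anti; [exact: subsetUr | exact: subU1set].
Qed.

End Weights.

Lemma iter_add_step_dominated (c v0 w0 : R) (v w : X -> R) j h P :
  0 <= c -> 0 <= v0 -> (forall e, 0 <= v e) -> (forall e, e \notin E -> v e = 0) ->
  0 <= w0 -> (forall e, 0 <= w e) -> (forall e, e \notin E -> w e = 0) ->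
  (forall g Q, antitone_on g -> nonneg_on g -> Q \subset E ->
     c * add_step v0 v g Q <= add_step w0 w g Q) ->
  antitone_on h -> nonneg_on h -> P \subset E ->
  c ^+ j * iter j (add_step v0 v) h P <= iter j (add_step w0 w) h P.
Proof.
move=> c_ge0 v0_ge0 v_ge0 v_out w0_ge0 w_ge0 w_out dom h_anti h_nn.
elim: j P => [|j IH] P PE; first by rewrite expr0 mul1r.
rewrite exprSr -mulrA !iterS.
apply: le_trans (ler_wpM2l (exprn_ge0 j c_ge0) (dom _ _ _ _ PE)) _.
- exact: iter_add_step_antitone.
- exact: iter_add_step_nonneg.
by rewrite -add_stepZ; apply: add_step_le.
Qed.

End AddStep.

Section MonotoneSubmodular.
Variables (R : realDomainType) (X : finType) (E : {set X}) (f : {set X} -> R).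
Implicit Types A B : {set X}.
Hypotheses (f_mono : forall A B, A \subset B -> B \subset E -> f A <= f B)
  (f_submod : forall A B, A \subset E -> B \subset E ->
     f (A :|: B) + f (A :&: B) <= f A + f B).

Definition gain (e : X) (A : {set X}) : R := f (e |: A) - f A.

Lemma gain_antitone e : e \in E -> antitone_on E (gain e).
Proof.
move=> eE A B AB BE; have eAE : e |: A \subset E by rewrite subU1set ?(subset_trans AB).
have := f_submod eAE BE; rewrite -setUA (setUidPr AB).
have : f A <= f ((e |: A) :&: B).
  by apply: f_mono; [rewrite subsetI subsetUr | exact: subset_trans (subsetIl _ _) eAE].
rewrite /gain; lra.
Qed.

Lemma gain_nonneg e : e \in E -> nonneg_on E (gain e).
Proof. by move=> eE A AE; rewrite subr_ge0 f_mono ?subsetUr ?subU1set. Qed.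

Lemma setU_sub_le_sum_gain A B : A \subset E -> B \subset E ->
  f (A :|: B) - f A <= \sum_(e in B) gain e A.
Proof.
move=> AE BE; rewrite -big_enum -[in A :|: B](set_enum B).
have : all [in E] (enum B) by apply/allP => e; rewrite mem_enum => /(subsetP BE).
elim: (enum B) => [|e s IH] /=; first by rewrite set_nil setU0 big_nil subrr.
case/andP => eE sE; rewrite set_cons big_cons setUCA.
have sAE : A :|: [set:: s] \subset E.
  by rewrite subUset AE; apply/subsetP => z; rewrite inE => /(allP sE).
have := gain_antitone eE (subsetUl A [set:: s]) sAE.
have := IH sE; rewrite /gain; lra.
Qed.

End MonotoneSubmodular.

Section MatchingSets.
Variables (U V : finType).
Implicit Types (E M N : {set U * V}).

Lemma matched0 u : matched (set0 : {set U * V}) u = false.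
Proof. by apply/existsP => -[v]; rewrite inE. Qed.

Lemma matchedU1 e M u : matched (e |: M) u = (e.1 == u) || matched M u.
Proof.
case: e => a b /=; apply/existsP/orP.
  case=> v; rewrite in_setU1 => /orP[/eqP[-> _]|H]; first by left.
  by right; apply/existsP; exists v.
case=> [/eqP <-|/existsP[v H]]; first by exists b; rewrite in_setU1 eqxx.
by exists v; rewrite in_setU1 H orbT.
Qed.

Lemma matched_subset M N u : M \subset N -> matched M u -> matched N u.
Proof. by move=> MN /existsP[v /(subsetP MN) uvN]; apply/existsP; exists v. Qed.

Lemma subset_apply_decision E M v o : M \subset apply_decision E M v o.
Proof. by case: o => [u|] //=; case: ifP => _; rewrite ?subsetUr. Qed.

Lemma apply_decision_subU1 E M u v : apply_decision E M v (Some u) \subset (u, v) |: M.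
Proof. by rewrite /=; case: ifP => _; rewrite ?subsetUr. Qed.

End MatchingSets.

Section OSBM.
Variables (R : realType) (U V : finType) (E : {set U * V}) (T : nat)
  (f : {set U * V} -> R).
Hypotheses (T_gt0 : (0 < T)%N) (V_le_T : (#|V| <= T)%N)
  (f_ms : monotone_submodular_on E f).
Implicit Types (A B M P Q : {set U * V}) (S : arrivals V T) (e : U * V).

Let f0 : f set0 = 0. Proof. by case: f_ms. Qed.
Let f_ge0 A : A \subset E -> 0 <= f A. Proof. by case: f_ms => _ + _ _; apply. Qed.
Let f_mono A B : A \subset B -> B \subset E -> f A <= f B.
Proof. by case: f_ms => _ _ + _; apply. Qed.
Let f_submod A B : A \subset E -> B \subset E -> f (A :|: B) + f (A :&: B) <= f A + f B.
Proof. by case: f_ms => _ _ _; apply. Qed.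
Let T_neq0 : T%:R != 0 :> R. Proof. by rewrite pnatr_eq0 -lt0n. Qed.

Local Notation gain := (gain f).

Lemma arr_prob_ge0 (a : option V) : 0 <= arr_prob R T a.
Proof.
case: a => [v|] /=; first by rewrite divr_ge0 ?ler0n.
by rewrite subr_ge0 ler_pdivrMr ?ltr0n // mul1r ler_nat.
Qed.

Lemma arr_prob_sum1 : \sum_(a : option V) arr_prob R T a = 1.
Proof.
rewrite big_option /= sumr_const cardT -cardE.
by rewrite -[1 / T%:R *+ _]mulr_natr mul1r mulrC subrK.
Qed.

Lemma seq_prob_ge0 S : 0 <= seq_prob R S.
Proof. by apply: prodr_ge0 => t _; exact: arr_prob_ge0. Qed.

Lemma seq_prob_sum1 : \sum_(S : arrivals V T) seq_prob R S = 1.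
Proof. exact: prod_ffun_sum1 arr_prob_sum1. Qed.

Lemma expected_arrivals v :
  \sum_(S : arrivals V T) seq_prob R S * #|[set t | S t == Some v]|%:R = 1.
Proof.
under eq_bigr => S _ do rewrite natr_card_set mulr_sumr.
rewrite exchange_big /= (eq_bigr (fun=> 1 / T%:R)) => [|t _]; last first.
  exact: (prod_ffun_marginal arr_prob_sum1 t (Some v)).
by rewrite sumr_const card_ord div1r -[_ *+ T]mulr_natr mulVf.
Qed.

Lemma feasible_matching0 S : feasible_matching E S set0.
Proof.
apply/and3P; split; rewrite ?sub0set //.
  by apply/forallP => u; rewrite setIdE set0I cards0.
by apply/forallP => v; rewrite setIdE set0I cards0.
Qed.

Definition opt_matching S : {set U * V} :=
  [arg max_(M > set0 | feasible_matching E S M) f M]%O.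

Lemma opt_matching_feasible S : feasible_matching E S (opt_matching S).
Proof. by rewrite /opt_matching; case: arg_maxP => //; exact: feasible_matching0. Qed.

Lemma opt_matching_sub S : opt_matching S \subset E.
Proof. by case/and3P: (opt_matching_feasible S). Qed.

Lemma OPT_opt_matching S : OPT E f S = f (opt_matching S).
Proof.
rewrite /OPT (bigmax_eq_arg _ set0) //; first exact: feasible_matching0.
by move=> M /and3P[ME _ _]; exact: f_ge0.
Qed.

Lemma expected_OPT_ge0 : 0 <= expected_OPT E f T.
Proof.
apply: sumr_ge0 => S _; rewrite mulr_ge0 ?seq_prob_ge0 // OPT_opt_matching.
exact/f_ge0/opt_matching_sub.
Qed.

Definition opt_marginal e : R :=
  \sum_(S : arrivals V T) seq_prob R S * (e \in opt_matching S)%:R.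

Lemma opt_marginal_ge0 e : 0 <= opt_marginal e.
Proof. by apply: sumr_ge0 => S _; rewrite mulr_ge0 ?seq_prob_ge0 ?ler0n. Qed.

Lemma opt_marginal_out e : e \notin E -> opt_marginal e = 0.
Proof.
move=> eNE; rewrite /opt_marginal big1 // => S _.
by rewrite (contraNF (subsetP (opt_matching_sub S) e)) ?mulr0.
Qed.

Lemma opt_marginal_deg_offline u : \sum_(e | e.1 == u) opt_marginal e <= 1.
Proof.
rewrite /opt_marginal exchange_big /= -[X in _ <= X]seq_prob_sum1.
apply: ler_sum => S _.
rewrite -mulr_sumr ler_piMr ?seq_prob_ge0 // sum_mem_card -[X in _ <= X]/(1%:R) ler_nat.
by case/and3P: (opt_matching_feasible S) => _ /forallP.
Qed.

Lemma opt_marginal_deg_online v : \sum_u opt_marginal (u, v) <= 1.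
Proof.
rewrite -sum_pairs_snd /opt_marginal exchange_big /=.
rewrite -[X in _ <= X](expected_arrivals v); apply: ler_sum => S _.
rewrite -mulr_sumr ler_wpM2l ?seq_prob_ge0 // sum_mem_card ler_nat.
by case/and3P: (opt_matching_feasible S) => _ _ /forallP.
Qed.

Lemma expected_OPT_sub_le A : A \subset E ->
  expected_OPT E f T - f A <= \sum_e opt_marginal e * gain e A.
Proof.
move=> AE.
have -> : \sum_e opt_marginal e * gain e A =
    \sum_(S : arrivals V T) seq_prob R S * \sum_(e in opt_matching S) gain e A.
  rewrite /opt_marginal; under eq_bigr => e _ do rewrite mulr_suml.
  rewrite exchange_big /=; apply: eq_bigr => S _.
  rewrite mulr_sumr [RHS]big_mkcond /=; apply: eq_bigr => e _.
  by case: (e \in opt_matching S); rewrite ?mulr1 ?mulr0 ?mul0r.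
rewrite /expected_OPT -[f A]mul1r -seq_prob_sum1 mulr_suml -sumrB.
apply: ler_sum => S _; rewrite -mulrBr ler_wpM2l ?seq_prob_ge0 // OPT_opt_matching.
apply: le_trans (setU_sub_le_sum_gain f_mono f_submod AE (opt_matching_sub S)).
by rewrite lerD2r f_mono ?subsetUr // subUset AE opt_matching_sub.
Qed.

Definition half_opt_policy : online_policy R U V := fun _ v =>
  [ffun o => if o is Some u then opt_marginal (u, v) / 2
             else 1 - (\sum_u opt_marginal (u, v)) / 2].

Lemma half_opt_policy_Some h v u :
  half_opt_policy h v (Some u) = opt_marginal (u, v) / 2.
Proof. by rewrite ffunE. Qed.

Lemma half_opt_policy_None h v :
  half_opt_policy h v None = 1 - (\sum_u opt_marginal (u, v)) / 2.
Proof. by rewrite ffunE. Qed.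

Lemma half_opt_policy_valid : valid_policy half_opt_policy.
Proof.
move=> h v; split=> [[u|]|].
- by rewrite half_opt_policy_Some divr_ge0 ?opt_marginal_ge0.
- by rewrite half_opt_policy_None; have := opt_marginal_deg_online v; lra.
rewrite big_option /= half_opt_policy_None.
under eq_bigr => u _ do rewrite half_opt_policy_Some.
by rewrite -mulr_suml subrK.
Qed.

Definition beta : R := (2 * T%:R)^-1.
Definition prop_rate e : R := beta * opt_marginal e.
Definition idle_rate : R := 1 - \sum_e prop_rate e.

Lemma beta_gt0 : 0 < beta.
Proof. by rewrite invr_gt0 mulr_gt0 ?ltr0n. Qed.

Lemma beta_mulT : beta * T%:R = 1/2.
Proof. by rewrite /beta; field. Qed.

Lemma beta_lt1 : beta < 1.
Proof.
have : 1 <= T%:R :> R by rewrite ler1n.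
have := beta_mulT; have := beta_gt0; nra.
Qed.

Lemma prop_rate_ge0 e : 0 <= prop_rate e.
Proof. by rewrite mulr_ge0 ?opt_marginal_ge0 // ltW // beta_gt0. Qed.

Lemma prop_rate_out e : e \notin E -> prop_rate e = 0.
Proof. by move=> /opt_marginal_out; rewrite /prop_rate => ->; rewrite mulr0. Qed.

Lemma sum_prop_rate_le : \sum_e prop_rate e <= 1/2.
Proof.
rewrite -mulr_sumr -beta_mulT ler_wpM2l ?(ltW beta_gt0) // sum_pairs.
apply: le_trans (_ : \sum_(v : V) 1 <= _).
  by apply: ler_sum => v _; exact: opt_marginal_deg_online.
by rewrite sumr_const -[X in X <= _]mulr_natr mul1r ler_nat.
Qed.

Lemma idle_rate_ge0 : 0 <= idle_rate.
Proof. by have := sum_prop_rate_le; rewrite /idle_rate; lra. Qed.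

Lemma prop_rate_deg_offline u : \sum_(e | e.1 == u) prop_rate e <= beta.
Proof.
rewrite -mulr_sumr -[X in _ <= X]mulr1 ler_wpM2l ?(ltW beta_gt0) //.
exact: opt_marginal_deg_offline.
Qed.

Local Notation augment M e := (apply_decision E M e.2 (Some e.1)).
#[local] Arguments apply_decision : simpl never.

Fixpoint policy_value k M : R :=
  if k is k'.+1 then
    idle_rate * policy_value k' M + \sum_e prop_rate e * policy_value k' (augment M e)
  else f M.

Lemma policy_round h (F : {set U * V} -> R) M :
  \sum_a arr_prob R T a *
    (if a is Some v then \sum_o half_opt_policy h v o * F (apply_decision E M v o)
     else F M) =
  idle_rate * F M + \sum_e prop_rate e * F (augment M e).
Proof.
have round_v v : arr_prob R T (Some v) *
    \sum_o half_opt_policy h v o * F (apply_decision E M v o) =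
    T%:R^-1 * F M - beta * (\sum_u opt_marginal (u, v)) * F M +
    \sum_u prop_rate (u, v) * F (apply_decision E M v (Some u)).
  rewrite big_option half_opt_policy_None /= mulrDr mulr_sumr.
  congr (_ + _); first by rewrite /beta; field.
  by apply: eq_bigr => u _; rewrite half_opt_policy_Some /prop_rate /beta; field.
rewrite big_option /= (eq_bigr _ (fun v _ => round_v v)) big_split sumrB /= sumr_const.
rewrite [in RHS]sum_pairs /= /idle_rate sum_pairs -(mulr_suml _ _ _ (F M)).
under [X in _ = (1 - X) * _ + _]eq_bigr => v _ do rewrite /prop_rate -mulr_sumr.
by rewrite -mulr_sumr -[_ *+ _]mulr_natr cardT -cardE /beta; field.
Qed.

Lemma alg_value_policy k h M :
  alg_value E f T half_opt_policy k h M = policy_value k M.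
Proof.
elim: k h M => [//|k IH] h M /=; rewrite -(policy_round h).
apply: eq_bigr => -[v|] _ /=; last by rewrite IH.
by congr (_ * _); apply: eq_bigr => o _; rewrite IH.
Qed.

(* [iter j (killed_step u) h P] is the expectation of [h] after [j] rounds of
   proposals started at [P], restricted to the runs proposing no edge at [u]. *)
Definition killed_step u : ({set U * V} -> R) -> {set U * V} -> R :=
  add_step idle_rate (fun e => (e.1 != u)%:R * prop_rate e).

(* Expected gain, [j] rounds ahead, of the proposals at offline vertices that
   no proposal has touched until then. *)
Definition future_gain j P : R :=
  \sum_e prop_rate e * (~~ matched P e.1)%:R * iter j (killed_step e.1) (gain e) P.

Lemma future_gainS j P :
  future_gain j.+1 P = add_step idle_rate prop_rate (future_gain j) P.
Proof.
rewrite /future_gain /add_step.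
under eq_bigr => e _ do rewrite iter_add_stepS mulrDr.
rewrite big_split /= mulr_sumr; congr (_ + _); first by apply: eq_bigr => e _; ring.
under eq_bigr => e _ do rewrite mulr_sumr.
rewrite exchange_big /=; apply: eq_bigr => e' _.
rewrite mulr_sumr; apply: eq_bigr => e _.
by rewrite matchedU1 negb_or -mulnb natrM; ring.
Qed.

Lemma future_gain0_le M P :
  M \subset P -> P \subset E -> (forall u, matched M u -> matched P u) ->
  future_gain 0 P <= \sum_e prop_rate e * (f (augment M e) - f M).
Proof.
move=> MP PE Mm; apply: ler_sum => -[u v] _ /=.
case: (boolP ((u, v) \in E)) => [eE|/prop_rate_out->]; last by rewrite !mul0r.
have augE : augment M (u, v) \subset E.
  apply: subset_trans (apply_decision_subU1 _ _ _ _) _.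
  by rewrite subU1set ?(subset_trans MP).
case: (boolP (matched P u)) => [uP|uNP] /=.
  rewrite mulr0 mul0r mulr_ge0 ?prop_rate_ge0 // subr_ge0.
  by rewrite f_mono ?subset_apply_decision.
have uNM : ~~ matched M u by apply: contra uNP; exact: Mm.
rewrite mulr1 ler_wpM2l ?prop_rate_ge0 // /apply_decision /= eE uNM /=.
exact: (gain_antitone f_mono f_submod eE MP PE).
Qed.

(* [P] collects all proposals so far; it covers every vertex matched in [M]. *)
Lemma policy_value_ge k M P :
  M \subset P -> P \subset E -> (forall u, matched M u -> matched P u) ->
  f M + \sum_(j < k) future_gain j P <= policy_value k M.
Proof.
elim: k M P => [|k IH] M P MP PE Mm; first by rewrite big_ord0 addr0.
have IH_idle := IH M P MP PE Mm.
have IH_prop e : e \in E ->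
    f (augment M e) + \sum_(j < k) future_gain j (e |: P) <=
    policy_value k (augment M e).
  move: e => [u v] eE; apply: IH.
  - exact: subset_trans (apply_decision_subU1 _ _ _ _) (setUS _ MP).
  - exact: subU1set.
  move=> w /(matched_subset (apply_decision_subU1 _ _ _ _)).
  by rewrite !matchedU1 => /orP[->|/Mm->]; rewrite ?orbT.
have gain0 := future_gain0_le MP PE Mm.
have L1 : idle_rate * (f M + \sum_(j < k) future_gain j P) <=
          idle_rate * policy_value k M.
  by rewrite ler_wpM2l ?idle_rate_ge0.
have L2 : \sum_e prop_rate e * (f (augment M e) + \sum_(j < k) future_gain j (e |: P))
          <= \sum_e prop_rate e * policy_value k (augment M e).
  apply: ler_sum => e _.
  case: (boolP (e \in E)) => [eE|/prop_rate_out->]; last by rewrite !mul0r.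
  by rewrite ler_wpM2l ?prop_rate_ge0 ?IH_prop.
have E1 : \sum_(j < k) future_gain j.+1 P = idle_rate * \sum_(j < k) future_gain j P +
    \sum_e prop_rate e * \sum_(j < k) future_gain j (e |: P).
  under eq_bigr => j _ do rewrite future_gainS.
  rewrite big_split /= -mulr_sumr; congr (_ + _).
  by rewrite exchange_big; apply: eq_bigr => e _; rewrite mulr_sumr.
have E2 : idle_rate * f M = f M - (\sum_e prop_rate e) * f M.
  by rewrite /idle_rate mulrBl mul1r.
rewrite mulrDr in L1.
rewrite (eq_bigr _ (fun e _ => mulrDr _ _ _)) big_split /= in L2.
rewrite (eq_bigr _ (fun e _ => mulrBr _ _ _)) sumrB -mulr_suml in gain0.
rewrite /= big_ord_recl /= E1; lra.
Qed.

Definition cond_rate e : R := prop_rate e / (1 - beta).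
Definition cond_idle : R := 1 - \sum_e cond_rate e.
Local Notation cond_step := (add_step cond_idle cond_rate).

Let one_sub_beta_gt0 : 0 < 1 - beta. Proof. by rewrite subr_gt0 beta_lt1. Qed.

Lemma cond_rate_ge0 e : 0 <= cond_rate e.
Proof. by rewrite divr_ge0 ?prop_rate_ge0 ?ltW. Qed.

Lemma cond_rate_out e : e \notin E -> cond_rate e = 0.
Proof. by move=> /prop_rate_out; rewrite /cond_rate => ->; rewrite mul0r. Qed.

Lemma cond_idle_ge0 : 0 <= cond_idle.
Proof.
rewrite subr_ge0 -mulr_suml ler_pdivrMr // mul1r.
have := sum_prop_rate_le; have := beta_mulT; have : 1 <= T%:R :> R by rewrite ler1n.
nra.
Qed.

Lemma cond_step_sum1 : cond_idle + \sum_e cond_rate e = 1.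
Proof. exact: subrK. Qed.

Lemma killed_step_dominates u g P : antitone_on E g -> nonneg_on E g -> P \subset E ->
  (1 - beta) * cond_step g P <= killed_step u g P.
Proof.
move=> g_anti g_nn PE.
have scale : (1 - beta) * cond_step g P =
    (idle_rate - beta) * g P + \sum_e prop_rate e * g (e |: P).
  rewrite /add_step mulrDr mulr_sumr /cond_idle /cond_rate -mulr_suml /idle_rate.
  congr (_ + _); first by field; rewrite gt_eqF.
  by apply: eq_bigr => e _; field; rewrite gt_eqF.
have split_u : \sum_e prop_rate e * g (e |: P) =
    \sum_e (e.1 != u)%:R * prop_rate e * g (e |: P) +
    \sum_(e | e.1 == u) prop_rate e * g (e |: P).
  rewrite [X in _ = _ + X]big_mkcond -big_split; apply: eq_bigr => e _.
  by case: (e.1 == u); rewrite /= ?mul1r ?mul0r ?addr0 ?add0r.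
(* Proposals at [u] have total rate at most [beta]. *)
have at_u : \sum_(e | e.1 == u) prop_rate e * g (e |: P) <= beta * g P.
  apply: le_trans (_ : \sum_(e | e.1 == u) prop_rate e * g P <= _).
    apply: ler_sum => e _; case: (boolP (e \in E)) => [eE|/prop_rate_out->].
      by rewrite ler_wpM2l ?prop_rate_ge0 ?g_anti ?subsetUr ?subU1set.
    by rewrite !mul0r.
  by rewrite -mulr_suml ler_wpM2r ?g_nn ?prop_rate_deg_offline.
rewrite scale split_u /killed_step /add_step; lra.
Qed.

Lemma iter_killed_step_ge u j h P : antitone_on E h -> nonneg_on E h -> P \subset E ->
  (1 - beta) ^+ j * iter j cond_step h P <= iter j (killed_step u) h P.
Proof.
apply: iter_add_step_dominated;
  rewrite ?cond_idle_ge0 ?idle_rate_ge0 ?(ltW one_sub_beta_gt0) //.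
- exact: cond_rate_ge0.
- exact: cond_rate_out.
- by move=> e; rewrite mulr_ge0 ?ler0n ?prop_rate_ge0.
- by move=> e /prop_rate_out->; rewrite mulr0.
- by move=> g Q; exact: killed_step_dominates.
Qed.

Definition coupled_gain : R :=
  \sum_(j < T) \sum_e prop_rate e * ((1 - beta) ^+ j * iter j cond_step (gain e) set0).

Lemma coupled_gain_le : coupled_gain <= policy_value T set0.
Proof.
have := @policy_value_ge T set0 set0 (subxx _) (sub0set E) (fun=> id).
rewrite f0 add0r; apply: le_trans; apply: ler_sum => j _; apply: ler_sum => e _.
rewrite matched0 mulr1.
case: (boolP (e \in E)) => [eE|/prop_rate_out->]; last by rewrite !mul0r.
rewrite ler_wpM2l ?prop_rate_ge0 ?iter_killed_step_ge ?sub0set //.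
- exact: gain_antitone.
- exact: gain_nonneg.
Qed.

Definition alpha : R := (1 - beta) ^+ T.
Definition cond_value : R := iter T cond_step f set0.

Lemma alpha_ge_half : 1/2 <= alpha.
Proof.
apply: le_trans (bernoulli_ineq T (_ : -1 <= - beta)).
  by rewrite mulrN [_ * beta]mulrC beta_mulT; lra.
by rewrite lerN2 ltW ?beta_lt1.
Qed.

Lemma alpha_le : alpha <= expR (- (1/2)).
Proof. by rewrite /alpha -beta_mulT [beta * _]mulrC exprn_le_expR ?ltW ?beta_lt1. Qed.

Lemma alpha_le1 : alpha <= 1.
Proof. by apply: le_trans alpha_le _; rewrite expR_le1; lra. Qed.

Lemma coupled_gain_ge_OPT_gap :
  (1 - alpha) * (expected_OPT E f T - cond_value) <= coupled_gain.
Proof.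
set EOPT := expected_OPT E f T; pose H e := iter T cond_step (gain e) set0.
have geom : \sum_(j < T) beta * (1 - beta) ^+ j = 1 - alpha.
  by rewrite -mulr_sumr /alpha; have := subrX1 (1 - beta) T; lra.
have late : \sum_(j < T) \sum_e prop_rate e * ((1 - beta) ^+ j * H e) <= coupled_gain.
  apply: ler_sum => j _; apply: ler_sum => e _.
  case: (boolP (e \in E)) => [eE|/prop_rate_out->]; last by rewrite !mul0r.
  rewrite ler_wpM2l ?prop_rate_ge0 // ler_wpM2l ?exprn_ge0 ?(ltW one_sub_beta_gt0) //.
  apply: iter_add_step_decreasing; rewrite ?cond_idle_ge0 ?cond_step_sum1 ?sub0set //.
  - exact: cond_rate_ge0.
  - exact: cond_rate_out.
  - exact: gain_antitone.
  - exact: ltnW.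
have late_eq : \sum_(j < T) \sum_e prop_rate e * ((1 - beta) ^+ j * H e) =
    (1 - alpha) * \sum_e opt_marginal e * H e.
  rewrite -geom mulr_suml; apply: eq_bigr => j _.
  by rewrite mulr_sumr; apply: eq_bigr => e _; rewrite /prop_rate; ring.
have OPT_gap : EOPT - cond_value <= \sum_e opt_marginal e * H e.
  rewrite /H -iter_add_step_sum.
  have -> : EOPT - cond_value = iter T cond_step (fun Q => EOPT + (-1) * f Q) set0.
    by rewrite iter_add_step_affine ?cond_step_sum1 // mulN1r.
  apply: iter_add_step_le; rewrite ?cond_idle_ge0 ?sub0set //.
  - exact: cond_rate_ge0.
  - exact: cond_rate_out.
  by move=> Q QE; rewrite mulN1r; exact: expected_OPT_sub_le.
rewrite late_eq in late; apply: le_trans late.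
by rewrite ler_wpM2l // subr_ge0 alpha_le1.
Qed.

Lemma cond_value_telescope :
  \sum_(j < T) \sum_e cond_rate e * iter j cond_step (gain e) set0 = cond_value.
Proof.
pose F j := iter j cond_step f set0.
have step_f : cond_step f = fun Q => f Q + \sum_e cond_rate e * gain e Q.
  apply: boolp.funext => Q; rewrite /add_step /gain.
  under [X in _ = _ + X]eq_bigr => e _ do rewrite mulrBr.
  by rewrite sumrB -(mulr_suml _ _ _ (f Q)) /cond_idle; ring.
have incr j : \sum_e cond_rate e * iter j cond_step (gain e) set0 = F j.+1 - F j.
  by rewrite /F iterSr step_f iter_add_stepD iter_add_step_sum addrC addKr.
rewrite (eq_bigr (fun j : 'I_T => F j.+1 - F j) (fun j _ => incr j)).
rewrite -(big_mkord xpredT (fun j => F j.+1 - F j)).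
by rewrite telescope_sumr // /F /= f0 subr0.
Qed.

Lemma coupled_gain_ge_cond_value : alpha * cond_value <= coupled_gain.
Proof.
rewrite -cond_value_telescope mulr_sumr; apply: ler_sum => j _.
rewrite mulr_sumr; apply: ler_sum => e _.
case: (boolP (e \in E)) => [eE|eNE]; last first.
  by rewrite cond_rate_out ?prop_rate_out // !mul0r mulr0.
have pe : prop_rate e = (1 - beta) * cond_rate e.
  by rewrite /cond_rate mulrC divfK ?gt_eqF.
set X := iter j cond_step (gain e) set0.
have X_ge0 : 0 <= X.
  apply: iter_add_step_nonneg; rewrite ?cond_idle_ge0 ?sub0set //.
  - exact: cond_rate_ge0.
  - exact: cond_rate_out.
  - exact: gain_nonneg.
have -> : prop_rate e * ((1 - beta) ^+ j * X) = (1 - beta) ^+ j.+1 * (cond_rate e * X).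
  by rewrite pe exprS; ring.
rewrite ler_wpM2r ?(mulr_ge0 (cond_rate_ge0 e) X_ge0) //.
apply: ler_wiXn2l; rewrite ?(ltW one_sub_beta_gt0) //.
by rewrite lerBlDr lerDl ltW ?beta_gt0.
Qed.

Lemma policy_value_ge_ratio : osbm_ratio R * expected_OPT E f T <= policy_value T set0.
Proof.
apply: le_trans coupled_gain_le.
have hA := coupled_gain_ge_OPT_gap; have hB := coupled_gain_ge_cond_value.
have a_lo := alpha_ge_half; have a_hi := alpha_le; have a_le1 := alpha_le1.
have P1 :
    alpha * ((1 - alpha) * (expected_OPT E f T - cond_value)) <= alpha * coupled_gain.
  by apply: ler_wpM2l => //; lra.
have P2 : (1 - alpha) * (alpha * cond_value) <= (1 - alpha) * coupled_gain.
  by apply: ler_wpM2l => //; lra.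
have : osbm_ratio R * expected_OPT E f T <= alpha * (1 - alpha) * expected_OPT E f T.
  by rewrite ler_wpM2r ?expected_OPT_ge0 ?osbm_ratio_le.
lra.
Qed.

End OSBM.

Theorem theorem1 (R : realType) (U V : finType) (E : {set U * V})
    (T : nat) (f : {set U * V} -> R) :
  (0 < T)%N -> (#|V| <= T)%N -> monotone_submodular_on E f ->
  exists pol : online_policy R U V,
    valid_policy pol /\
    osbm_ratio R * expected_OPT E f T <= expected_ALG E f T pol.
Proof.
move=> T_gt0 V_le_T f_ms; exists (half_opt_policy E T f); split.
  exact: half_opt_policy_valid T_gt0 V_le_T.
rewrite /expected_ALG (alg_value_policy _ _ T_gt0).
exact: policy_value_ge_ratio.
Qed.
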